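(* Let $W$ be a finite set of possible worlds and let $G=(2^W,\gg)$ and $G'=(2^W,\gg')$ be belief algebras on $W$. Then $G\cap G'=(2^W,\gg\cap\gg')$ is a belief algebra.
   Context: $R_W=\{(U,V)\mid U,V\subseteq W,\ U\cap V=\varnothing\}$. A belief algebra on $W$ is a pair $(2^W,\gg)$, $\gg$ a binary relation on $2^W$, such that for all $U,V,U_1,V_1,U_2,V_2\subseteq W$: (A0) $\gg\subseteq R_W$; (A1) $U\gg\varnothing$ iff $U\neq\varnothing$; (A2) if $U\gg V$ then not $V\gg U$; (A3) if $U_1\supseteq U$, $U\gg V$, $V\supseteq V_1$ and $U_1\cap V_1=\varnothing$, then $U_1\gg V_1$; (A4) if $U=U_1\cup V_1=U_2\cup V_2$, $U_1\gg V_1$ and $U_2\gg V_2$, then $U_1\cap U_2\gg V_1\cup V_2$. Relations are viewed as sets of pairs. *)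

From mathcomp Require Import all_boot.
Set Implicit Arguments. Unset Strict Implicit. Unset Printing Implicit Defensive.

Definition brel (W : finType) := {set W} -> {set W} -> Prop.

Definition rel_inter (W : finType) (g g' : brel W) : brel W :=
  fun U V => g U V /\ g' U V.

Definition belief_algebra (W : finType) (gg : brel W) : Prop :=
  (forall U V : {set W}, gg U V -> U :&: V = set0) /\
  (forall U, gg U set0 <-> U != set0) /\
  (forall U V, gg U V -> ~ gg V U) /\
  (forall U V U1 V1 : {set W}, U \subset U1 -> gg U V -> V1 \subset V ->
              U1 :&: V1 = set0 -> gg U1 V1) /\
  (forall U U1 V1 U2 V2 : {set W}, U = U1 :|: V1 -> U = U2 :|: V2 ->
              gg U1 V1 -> gg U2 V2 -> gg (U1 :&: U2) (V1 :|: V2)).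

From mathcomp Require Import all_boot.

(* (A0) and (A2) pass to every subrelation; (A3), (A4) and the forward half
   of (A1) are Horn conditions, hence stable under intersection; the backward
   half of (A1) holds since both relations contain every (U, set0) with U
   nonempty. *)

Section BeliefAxioms.

Variable W : finType.
Implicit Types g : brel W.

Definition disjoint_pairs g := forall U V, g U V -> U :&: V = set0.

Definition nonempty_gg_set0 g := forall U, g U set0 <-> U != set0.

Definition asymmetric g := forall U V, g U V -> ~ g V U.

Definition weakening_closed g := forall U V U1 V1 : {set W},
  U \subset U1 -> g U V -> V1 \subset V -> U1 :&: V1 = set0 -> g U1 V1.

Definition split_closed g := forall U U1 V1 U2 V2 : {set W},
  U = U1 :|: V1 -> U = U2 :|: V2 -> g U1 V1 -> g U2 V2 ->
  g (U1 :&: U2) (V1 :|: V2).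

Lemma belief_algebraP g :
  belief_algebra g <->
  [/\ disjoint_pairs g, nonempty_gg_set0 g, asymmetric g,
      weakening_closed g & split_closed g].
Proof. by split=> [[? [? [? [? ?]]]] | []]. Qed.

Variables g g' : brel W.

Lemma disjoint_pairs_inter :
  disjoint_pairs g -> disjoint_pairs (rel_inter g g').
Proof. by move=> dg U V [gUV _]; apply: dg. Qed.

Lemma nonempty_gg_set0_inter :
  nonempty_gg_set0 g -> nonempty_gg_set0 g' ->
  nonempty_gg_set0 (rel_inter g g').
Proof.
move=> ng ng' U; split=> [[/ng //] | U0].
by split; [apply/ng | apply/ng'].
Qed.

Lemma asymmetric_inter : asymmetric g -> asymmetric (rel_inter g g').
Proof. by move=> ag U V [gUV _] [gVU _]; apply: ag gVU. Qed.

Lemma weakening_closed_inter :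
  weakening_closed g -> weakening_closed g' ->
  weakening_closed (rel_inter g g').
Proof.
move=> wg wg' U V U1 V1 sUU1 [gUV g'UV] sV1V dU1V1.
by split; [exact: wg sUU1 gUV sV1V dU1V1 | exact: wg' sUU1 g'UV sV1V dU1V1].
Qed.

Lemma split_closed_inter :
  split_closed g -> split_closed g' -> split_closed (rel_inter g g').
Proof.
move=> cg cg' U U1 V1 U2 V2 eU1 eU2 [g1 g'1] [g2 g'2].
by split; [exact: cg eU1 eU2 g1 g2 | exact: cg' eU1 eU2 g'1 g'2].
Qed.

End BeliefAxioms.

Theorem proposition1 (W : finType) (gg gg' : brel W) :
  belief_algebra gg -> belief_algebra gg' -> belief_algebra (rel_inter gg gg').
Proof.
move=> /belief_algebraP[d n a w s] /belief_algebraP[_ n' _ w' s'].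
apply/belief_algebraP; split.
- exact: disjoint_pairs_inter.
- exact: nonempty_gg_set0_inter.
- exact: asymmetric_inter.
- exact: weakening_closed_inter.
- exact: split_closed_inter.
Qed.
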